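(* Let $G$ be a simple graph and $a,b$ two distinct vertices of $G$. Then the adjacency matrix of $G$ is nondegenerate over $\mathbb{F}_2$ if and only if the adjacency matrix of $\widetilde G_{ab}$ is nondegenerate over $\mathbb{F}_2$; i.e. the nondegeneracy $\nu$ satisfies $\nu(\widetilde G_{ab})=\nu(G)$.
   Context: The adjacency matrix $A(G)$ of a simple graph $G$ with vertices numbered $1,\dots,n$ is the $n\times n$ matrix over $\mathbb{F}_2$ with entry $1$ in position $(i,j)$ iff vertices $i,j$ are adjacent, and $0$ otherwise (zero diagonal). $G$ is nondegenerate if $\det A(G)=1$ over $\mathbb{F}_2$; the nondegeneracy $\nu(G)$ is $1$ if $G$ is nondegenerate and $0$ otherwise. The graph $\widetilde G_{ab}$ (second Vassiliev move) is obtained from $G$ by switching the adjacency between $a$ and each vertex $v\neq a$ of $G$ adjacent to $b$. *)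

From mathcomp Require Import all_boot all_order all_algebra.
Set Implicit Arguments. Unset Strict Implicit. Unset Printing Implicit Defensive.
Import GRing.Theory.
Local Open Scope ring_scope.

Definition simple_graph (n : nat) (e : rel 'I_n) : Prop :=
  symmetric e /\ irreflexive e.

Definition adj_mx (n : nat) (e : rel 'I_n) : 'M['F_2]_n :=
  \matrix_(i, j) (e i j)%:R.

Definition nondeg_F2 (n : nat) (e : rel 'I_n) : bool :=
  \det (adj_mx e) == 1.

(* Second Vassiliev move: switch adjacency between a and every v <> a
   adjacent to b. *)
Definition vassiliev2 (n : nat) (e : rel 'I_n) (a b : 'I_n) : rel 'I_n :=
  fun x y =>
    (e x y (+) ((x == a) && (y != a) && e b y))
           (+) ((y == a) && (x != a) && e b x).

(** Over F_2 the second Vassiliev move is a congruence: writing P = 1 + E_ab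
    for the elementary transvection adding row b to row a, one checks entrywise
    that A(G~_ab) = P A(G) P^T, using that A(G) is symmetric with zero
    diagonal.  Since a <> b, P is triangular up to transposition with unit
    diagonal, so det P = 1 and det A(G~_ab) = det A(G). *)
From mathcomp Require Import all_boot all_order all_algebra.
Import GRing.Theory.
Local Open Scope ring_scope.

Lemma det_transvection (R : comPzRingType) n (a b : 'I_n) :
  a != b -> \det (1%:M + delta_mx a b : 'M[R]_n) = 1.
Proof.
wlog lt_ba : a b / (b < a)%N => [wlog_lt ab|ab].
  case: (ltngtP b a) => [lt_ba|lt_ab|/val_inj eq_ba].
  - exact: wlog_lt.
  - by rewrite -det_tr linearD /= trmx1 trmx_delta wlog_lt // eq_sym.
  - by rewrite eq_ba eqxx in ab.
rewrite det_trig; last first.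
  apply/is_trig_mxP => i j lt_ij; rewrite !mxE.
  have /negbTE -> : i != j by apply: contraTneq lt_ij => ->; rewrite ltnn.
  have /negbTE -> : ~~ ((i == a) && (j == b)).
    by apply: contraTN lt_ij => /andP[/eqP-> /eqP->]; rewrite -leqNgt ltnW.
  by rewrite add0r.
apply: big1 => i _; rewrite !mxE eqxx.
have /negbTE -> : ~~ ((i == a) && (i == b)).
  by apply: contraNN ab => /andP[/eqP <- /eqP <-].
by rewrite addr0.
Qed.

Section DeltaProducts.
Variables (R : pzRingType) (n : nat).
Implicit Types (A : 'M[R]_n) (a b i j : 'I_n).

Lemma delta_mulmxE a b A i j : (delta_mx a b *m A) i j = (i == a)%:R * A b j.
Proof.
rewrite mxE (bigD1 b) //= big1 ?addr0 => [|k /negbTE kb]; rewrite mxE ?eqxx ?andbT //.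
by rewrite kb andbF mul0r.
Qed.

Lemma mulmx_deltaE a b A i j : (A *m delta_mx b a) i j = A i b * (j == a)%:R.
Proof.
rewrite mxE (bigD1 b) //= big1 ?addr0 => [|k /negbTE kb]; rewrite mxE ?eqxx //.
by rewrite kb mulr0.
Qed.

Lemma transvection_congrE a b A i j :
  ((1%:M + delta_mx a b) *m A *m (1%:M + delta_mx a b)^T) i j =
  A i j + (i == a)%:R * A b j + A i b * (j == a)%:R
        + (i == a)%:R * A b b * (j == a)%:R.
Proof.
rewrite raddfD /= trmx1 trmx_delta mulmxDl mul1mx !mulmxDr !mulmx1 mulmxDl addrA.
(* [!mxE] would also unfold the three products into sums. *)
by do 3 rewrite mxE; rewrite !delta_mulmxE !mulmx_deltaE delta_mulmxE.
Qed.

End DeltaProducts.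

Lemma natr_addb_pchar2 (R : nzRingType) (x y : bool) :
  2%N \in [pchar R] -> (x (+) y)%:R = x%:R + y%:R :> R.
Proof. by move=> charR2; case: x; case: y; rewrite /= ?addr0 ?add0r ?addrr_pchar2. Qed.

Lemma adj_mx_vassiliev2 n (e : rel 'I_n) (a b : 'I_n) :
  simple_graph e -> a != b ->
  adj_mx (vassiliev2 e a b)
  = (1%:M + delta_mx a b) *m adj_mx e *m (1%:M + delta_mx a b)^T.
Proof.
move=> [esym eirr] ab; have charF2 := @pchar_Fp 2 isT.
apply/matrixP => x y; rewrite transvection_congrE !mxE /vassiliev2.
rewrite !natr_addb_pchar2 // eirr mulr0n mulr0 mul0r addr0 (esym x b).
case: (eqVneq x a) => [->|xa]; case: (eqVneq y a) => [->|ya];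
  by rewrite /= ?eqxx ?mul1r ?mulr1 ?mul0r ?mulr0 ?addr0 ?add0r ?addrK_pchar2.
Qed.

Theorem mainTheorem2 (n : nat) (e : rel 'I_n) (a b : 'I_n) :
  simple_graph e -> a != b ->
  nondeg_F2 (vassiliev2 e a b) = nondeg_F2 e.
Proof.
move=> simple_e ab; rewrite /nondeg_F2 adj_mx_vassiliev2 //.
by rewrite !det_mulmx det_tr det_transvection // mul1r mulr1.
Qed.
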